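(* Let $N\ge 1$ and let $S\subset\mathbb{P}^1\times\mathbb{P}^1$ be a real curve of bidegree $(N,N)$ not intersecting the anti-diagonal $\bar\Delta$, and suppose $S$ admits a grid determined by distinct points $\gamma_0,\dots,\gamma_N\in\mathbb{C}$, i.e. $$\{(-1/\bar\gamma_i,\gamma_j)\ :\ 0\le i\neq j\le N\}\subset S .$$ Then there exist positive real numbers $\lambda_0,\dots,\lambda_N$ such that $S$ is the curve $$\sum_{i=0}^N\lambda_i^2\prod_{\substack{j=0\\ j\neq i}}^N(\zeta-\gamma_j)(1+\eta\bar\gamma_j)=0,$$ i.e. $S$ is the spectral curve determined by the JNR data with poles $\gamma_0,\dots,\gamma_N$ and weights $\lambda_0,\dots,\lambda_N$.
   Context: $\mathbb{P}^1\times\mathbb{P}^1$ has affine coordinates $(\eta,\zeta)$. A curve of bidegree $(N,N)$ is the zero set of a nonzero polynomial $p(\eta,\zeta)$ of degree at most $N$ in each variable (a section of $\mathcal{O}(N,N)$). The anti-diagonal is $\bar\Delta=\{(\eta,\zeta):\eta=-1/\bar\zeta\}$. The curve is real if it is invariant under the anti-holomorphic involution $\tau(\eta,\zeta)=(-1/\bar\zeta,-1/\bar\eta)$. For $\gamma=0$ the point $-1/\bar\gamma$ means $\infty\in\mathbb{P}^1$. A grid determined by distinct points $\gamma_0,\dots,\gamma_N$ is the set $\{(-1/\bar\gamma_i,\gamma_j):0\le i\neq j\le N\}$, and a curve admits a grid if it contains such a set. *)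

From mathcomp Require Import all_boot all_order all_algebra complex.
From mathcomp Require Import reals Rstruct.
Set Implicit Arguments. Unset Strict Implicit. Unset Printing Implicit Defensive.
Import Order.TTheory GRing.Theory Num.Theory.
Local Open Scope ring_scope.

Definition C : numClosedFieldType := (Rdefinitions.R)[i].

(* The Riemann sphere P^1: [Some z] is the affine point z, [None] is infinity. *)
Definition P1 := option C.

(* A curve of bidegree (N,N): coefficient matrix of p(eta,zeta) = sum a_kl eta^k zeta^l,
   0 <= k,l <= N.  Evaluation of the bihomogenization
   P(eta0,eta1;zeta0,zeta1) = sum a_kl eta0^k eta1^(N-k) zeta0^l zeta1^(N-l)
   at the point with affine coordinates (eta,zeta), infinity being (1:0). *)
Definition mono (N k : nat) (x : P1) : C :=
  match x with Some z => z ^+ k | None => (k == N)%:R end.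

Definition bieval (N : nat) (a : 'M[C]_(N.+1, N.+1)) (eta zeta : P1) : C :=
  \sum_(k < N.+1) \sum_(l < N.+1) a k l * mono N k eta * mono N l zeta.

Definition zeroset (N : nat) (a : 'M[C]_(N.+1, N.+1)) (x : P1 * P1) : Prop :=
  bieval a x.1 x.2 = 0.

Definition antip (x : P1) : P1 :=
  match x with
  | Some z => if z == 0 then None else Some (- (Num.conj z)^-1)
  | None => Some 0
  end.

Definition tau (x : P1 * P1) : P1 * P1 := (antip x.2, antip x.1).

Definition antidiag (x : P1 * P1) : Prop := x.1 = antip x.2.

Definition real_curve (N : nat) (a : 'M[C]_(N.+1, N.+1)) : Prop :=
  forall x, zeroset a x <-> zeroset a (tau x).

Definition admits_grid (N : nat) (a : 'M[C]_(N.+1, N.+1)) (g : 'I_N.+1 -> C) : Prop :=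
  forall i j : 'I_N.+1, i != j -> zeroset a (antip (Some (g i)), Some (g j)).

Definition zfac (g : C) (zeta : P1) : C :=
  match zeta with Some z => z - g | None => 1 end.
Definition efac (g : C) (eta : P1) : C :=
  match eta with Some e => 1 + e * Num.conj g | None => Num.conj g end.

Definition jnr_eval (N : nat) (g : 'I_N.+1 -> C) (lam : 'I_N.+1 -> Rdefinitions.R)
    (x : P1 * P1) : C :=
  \sum_(i < N.+1) ((lam i) ^+ 2)%:C%C * \prod_(j < N.+1 | j != i) (zfac (g j) x.2 * efac (g j) x.1).

(* Interpolating in each variable, a bidegree (N,N) polynomial p vanishing on the grid is
   sum_i mu_i P_i with P_i = prod_(j <> i) (zeta - gamma_j)(1 + eta conj gamma_j); mu_i is
   read off at the diagonal point (-1/conj gamma_i, gamma_i), where p does not vanish.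
   The involution tau sends P_i to a nonvanishing multiple of conj P_i, so on a real curve
   q = sum_i conj(mu_i) P_i vanishes wherever p does.  For generic eta the fibre p(eta,.)
   has N simple roots (the discriminant is a nonzero polynomial in eta, as one sees at
   eta = -1/conj gamma_k, where only P_k survives), so q(eta,.) is a multiple of p(eta,.),
   and comparing Lagrange coordinates gives conj(mu_i) = c mu_i: the ratios
   rho_i = mu_i / mu_0 are real.  On the antidiagonal p is a nonzero multiple of
   W(z) = sum_i rho_i prod_(j <> i) |z - gamma_j|^2, which therefore never vanishes; as
   W(gamma_l) has the sign of rho_l, the intermediate value theorem on the segment from
   gamma_0 to gamma_i makes every rho_i positive, and lambda_i = sqrt rho_i. *)
From mathcomp Require Import all_boot all_order all_algebra complex.
From mathcomp Require Import reals Rstruct.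
From mathcomp Require Import separable polyrcf zify ring.
Set Implicit Arguments. Unset Strict Implicit. Unset Printing Implicit Defensive.
Import Order.TTheory GRing.Theory Num.Theory.
Local Open Scope ring_scope.

Section Forms.
Variable K : idomainType.
Implicit Types F G : option K -> K.

Definition hom_horner (n : nat) (q : {poly K}) (x : option K) : K :=
  if x is Some z then q.[z] else q`_n.

(* [F] is a binary form of degree [n] on the projective line [option K] ([None] is the
   point at infinity), written in the affine coordinate. *)
Definition is_form (n : nat) F :=
  exists2 q : {poly K}, (size q <= n.+1)%N & F =1 hom_horner n q.

Lemma eq_form n F G : F =1 G -> is_form n F -> is_form n G.
Proof. by move=> eFG [q sq Fq]; exists q => // x; rewrite -eFG. Qed.

Lemma form0 n : is_form n (fun=> 0).
Proof. by exists 0; rewrite ?size_poly0 // => -[z|] /=; rewrite ?horner0 ?coef0. Qed.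

Lemma formD n F G : is_form n F -> is_form n G -> is_form n (fun x => F x + G x).
Proof.
move=> [p sp Fp] [q sq Gq]; exists (p + q).
  by rewrite (leq_trans (size_polyD _ _)) // geq_max sp.
by move=> [z|] /=; rewrite Fp Gq /= ?hornerD ?coefD.
Qed.

Lemma formB n F G : is_form n F -> is_form n G -> is_form n (fun x => F x - G x).
Proof.
move=> [p sp Fp] [q sq Gq]; exists (p - q).
  by rewrite (leq_trans (size_polyD _ _)) // size_polyN geq_max sp.
by move=> [z|] /=; rewrite Fp Gq /= ?hornerD ?hornerN ?coefB.
Qed.

Lemma formZ n c F : is_form n F -> is_form n (fun x => c * F x).
Proof.
move=> [q sq Fq]; exists (c *: q); first exact: leq_trans (size_scale_leq _ _) sq.
by move=> [z|] /=; rewrite Fq /= ?hornerZ ?coefZ.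
Qed.

Lemma form_sum n (I : Type) (r : seq I) (P : pred I) (F : I -> option K -> K) :
  (forall i, P i -> is_form n (F i)) ->
  is_form n (fun x => \sum_(i <- r | P i) F i x).
Proof.
move=> formF; elim: r => [|i r IHr].
  by apply: eq_form (form0 n) => x; rewrite big_nil.
have [Pi|nPi] := boolP (P i).
  by apply: eq_form (formD (formF i Pi) IHr) => x; rewrite big_cons Pi.
by apply: eq_form IHr => x; rewrite big_cons (negPf nPi).
Qed.

Lemma coefM_size (p q : {poly K}) m n :
  (size p <= m.+1)%N -> (size q <= n.+1)%N -> (p * q)`_(m + n) = p`_m * q`_n.
Proof.
move=> sp sq; rewrite coefM (bigD1 (Ordinal (leq_addr n m.+1))) //= addKn.
rewrite big1 ?addr0 // => -[j /= ltj] neqj.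
have [ltjm|lemj] := ltnP j m.
  by rewrite [q`_ _]nth_default ?mulr0 // (leq_trans sq) //; lia.
have {}ltmj : (m < j)%N.
  by rewrite ltn_neqAle lemj andbT; apply: contraNneq neqj => mj; rewrite -val_eqE /= mj.
by rewrite [p`_ _]nth_default ?mul0r // (leq_trans sp).
Qed.

Lemma formM m n F G : is_form m F -> is_form n G -> is_form (m + n) (fun x => F x * G x).
Proof.
move=> [p sp Fp] [q sq Gq]; exists (p * q).
  by rewrite (leq_trans (size_mul_leq _ _)) //; lia.
by move=> [z|] /=; rewrite Fp Gq /= ?hornerM ?coefM_size.
Qed.

Lemma form_prod (I : Type) (r : seq I) (P : pred I) (F : I -> option K -> K) :
  (forall i, P i -> is_form 1 (F i)) ->
  is_form (count P r) (fun x => \prod_(i <- r | P i) F i x).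
Proof.
move=> formF; elim: r => [|i r IHr] /=.
  exists 1; first by rewrite size_poly1.
  by move=> [z|] /=; rewrite big_nil ?hornerC ?coefC.
have [Pi|nPi] := boolP (P i).
  by apply: eq_form (formM (formF i Pi) IHr) => x; rewrite big_cons Pi.
by apply: eq_form IHr => x; rewrite big_cons (negPf nPi).
Qed.

Lemma form_eq0 n F (s : seq (option K)) :
  is_form n F -> uniq s -> (n < size s)%N -> {in s, F =1 fun=> 0} -> F =1 fun=> 0.
Proof.
move=> [q sq Fq] us lt_n_s Fs0.
suff q0 : q = 0 by move=> x; rewrite Fq q0; case: x => [z|] /=; rewrite ?horner0 ?coef0.
apply: contraTeq lt_n_s => nz_q; rewrite -leqNgt.
pose r := pmap id s.
have sz_s : size s = ((None \in s) + size r)%N.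
  rewrite size_pmap -(count_predC (pred1 None)) -count_uniq_mem //.
  by congr (_ + _)%N; apply: eq_count => -[].
have ur : uniq r by apply: (@pmap_uniq _ _ id Some) => // -[].
have := max_poly_roots nz_q _ ur.
have -> : all (root q) r.
  by apply/allP => z; rewrite mem_pmap map_id => /Fs0; rewrite Fq => /eqP.
rewrite sz_s; have [inf_s|_] := boolP (None \in s) => /(_ isT) lt_r_q; last first.
  by rewrite -ltnS (leq_trans lt_r_q).
have q_n : (size q <= n)%N.
  apply/leq_sizeP => j; rewrite leq_eqVlt => /orP[/eqP<-|ltnj].
    by have := Fs0 _ inf_s; rewrite Fq.
  by rewrite nth_default // (leq_trans sq).
by rewrite add1n (leq_trans lt_r_q).
Qed.

Lemma form_eq0_inj n F (f : 'I_n.+1 -> option K) :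
  is_form n F -> injective f -> (forall i, F (f i) = 0) -> F =1 fun=> 0.
Proof.
move=> formF f_inj Ff0; apply: (@form_eq0 n F (map f (enum 'I_n.+1)) formF).
- by rewrite map_inj_uniq ?enum_uniq.
- by rewrite size_map size_enum_ord.
by move=> _ /mapP[i _ ->].
Qed.

End Forms.

Lemma count_neq_ord n (i : 'I_n.+1) : count (fun j => j != i) (index_enum 'I_n.+1) = n.
Proof.
have := cardC1 i; rewrite card_ord /= => card_neq.
by rewrite -[RHS]card_neq cardE /enum_mem size_filter.
Qed.

Lemma prodr_const_neq (R : comPzSemiRingType) n (i : 'I_n.+1) (c : R) :
  \prod_(j < n.+1 | j != i) c = c ^+ n.
Proof. by rewrite prodr_const cardC1 card_ord. Qed.

Lemma separable_resultant (K : idomainType) (p : {poly K}) :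
  p != 0 -> separable_poly p = (resultant p p^`() != 0).
Proof.
move=> nz_p; rewrite resultant_eq0 -leqNgt separable_poly.unlock coprimep_def eqn_leq.
by rewrite lt0n size_poly_eq0 gcdp_eq0 (negPf nz_p) andbT.
Qed.

Lemma lead_coef_deriv (K : idomainType) (p : {poly K}) :
  [pchar K] =i pred0 -> lead_coef p^`() = lead_coef p *+ (size p).-1.
Proof.
move=> /pcharf0P char0; have [le_p1|lt1p] := leqP (size p) 1.
  by rewrite [p]size1_polyC // derivC lead_coef0 size_polyC; case: (_ != 0).
have nz_p : p != 0 by rewrite -size_poly_gt0 ltnW.
have coef_top : p^`()`_(size p).-2 = lead_coef p *+ (size p).-1.
  by rewrite coef_deriv lead_coefE -!subn1 -subnDA addn1 subnSK.
have nz_top : p^`()`_(size p).-2 != 0.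
  by rewrite coef_top -mulr_natr mulf_neq0 ?lead_coef_eq0 // char0 -lt0n ltn_predRL.
have size_deriv : size p^`() = (size p).-1.
  apply/eqP; rewrite eqn_leq -ltnS prednK ?lt_size_deriv ?(ltnW lt1p) //=.
  have : ((size p).-2 < size p^`())%N.
    by rewrite ltnNge; apply: contra nz_top => /leq_sizeP->.
  by case: (size p) lt1p => [|[|n]].
by rewrite lead_coefE size_deriv coef_top.
Qed.

Lemma separable_roots_scale (F : closedFieldType) (p q : {poly F}) :
  separable_poly p -> (size q <= size p)%N -> (forall x, root p x -> root q x) ->
  exists c, q = c *: p.
Proof.
move=> sep_p le_qp pq; have nz_p := separable_poly_neq0 sep_p.
have nz_lp : lead_coef p != 0 by rewrite lead_coef_eq0.
have [r Dp] := closed_field_poly_normal p.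
have ur : uniq r.
  by rewrite -separable_prod_XsubC -(eqp_separable (eqp_scale _ nz_lp)) -Dp.
have p_dvd_q : p %| q.
  rewrite Dp dvdpZl // uniq_roots_dvdp ?uniq_rootsE //; apply/allP => x rx.
  by apply: pq; rewrite Dp rootZ // root_prod_XsubC.
have [->|nz_q] := eqVneq q 0; first by exists 0; rewrite scale0r.
have /eqpP[[c1 c2] /andP[nz_c1 nz_c2] /= Dq] : p %= q.
  by rewrite -dvdp_size_eqp // eqn_leq dvdp_leq.
by exists (c2^-1 * c1); rewrite -scalerA Dq scalerA mulVf ?scale1r.
Qed.

(* The discriminant of [P] is a polynomial in the parameter, nonzero as soon as one fibre
   is separable of full degree. *)
Lemma exists_separable_fibre (F : numClosedFieldType) (P : {poly {poly F}}) (Q : {poly F}) e1 :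
  Q != 0 -> (1 < size P)%N -> (lead_coef P).[e1] != 0 ->
  separable_poly (map_poly (horner_eval e1) P) ->
  exists e, [/\ Q.[e] != 0, (lead_coef P).[e] != 0 &
                separable_poly (map_poly (horner_eval e) P)].
Proof.
move=> nz_Q lt1P nz_lead1 sep1.
set R := resultant P P^`().
have R_eval e : (lead_coef P).[e] != 0 ->
    separable_poly (map_poly (horner_eval e) P) = (R.[e] != 0).
  move=> nz_lead; have nz_Pe : map_poly (horner_eval e) P != 0.
    by rewrite -size_poly_eq0 size_map_poly_id0 ?size_poly_eq0 -?size_poly_gt0 ?(ltnW lt1P).
  rewrite separable_resultant // deriv_map -horner_evalE map_resultant //.
  rewrite lead_coef_deriv => [|n]; last by rewrite pchar_poly pchar_num.
  by rewrite raddfMn /= mulrn_eq0 negb_or -lt0n ltn_predRL lt1P.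
have nz_R : R != 0 by apply: contraTneq sep1 => R0; rewrite R_eval // R0 horner0 eqxx.
have nz_lead : lead_coef P != 0 by apply: contraNneq nz_lead1 => ->; rewrite horner0.
have /closed_nonrootP[e] : R * lead_coef P * Q != 0 by rewrite !mulf_neq0.
rewrite !rootM !negb_or => /andP[/andP[nz_Re nz_le] nz_Qe].
by exists e; split; rewrite ?R_eval.
Qed.

Lemma map_poly_conjK (F : numClosedFieldType) : involutive (map_poly (@Num.conj F)).
Proof. by move=> p; rewrite -map_poly_comp map_poly_id // => x _ /=; rewrite conjCK. Qed.

Lemma real_poly_ivt (R : rcfType) (G : {poly R[i]}) :
  map_poly Num.conj G = G -> G.[0] * G.[1] <= 0 ->
  exists2 t : R, 0 <= t <= 1 & root G t%:C%C.
Proof.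
move=> G_real G01; pose GR := map_poly (@complex.Re R) G.
have GE (t : R) : G.[t%:C%C] = (GR.[t])%:C%C.
  suff DG : G = map_poly (real_complex R) GR by rewrite [in LHS]DG horner_map.
  apply/polyP => n; rewrite coef_map coef_map_id0 //= RRe_real //.
  by apply/CrealP; rewrite -coef_map G_real.
have GR01 : GR.[0] * GR.[1] <= 0 by rewrite -lecR rmorphM /= -!GE.
have [t t01 rt] := polyrcf.poly_ivt ler01 GR01.
by exists t; rewrite ?in_itv // /root GE (eqP rt).
Qed.

Lemma mono_form N k : (k <= N)%N -> is_form N (mono N k).
Proof.
move=> le_kN; exists 'X^k; first by rewrite size_polyXn.
by move=> [z|] /=; rewrite ?hornerXn // coefXn eq_sym.
Qed.

Lemma bieval_form_r N (a : 'M[C]_N.+1) eta : is_form N (bieval a eta).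
Proof.
apply: form_sum => k _; apply: form_sum => l _.
exact/formZ/mono_form/ltnSE/ltn_ord.
Qed.

Lemma bieval_form_l N (a : 'M[C]_N.+1) zeta : is_form N (bieval a ^~ zeta).
Proof.
apply: (@eq_form _ _ (fun eta => \sum_k \sum_l a k l * mono N l zeta * mono N k eta)).
  by move=> eta; apply: eq_bigr => k _; apply: eq_bigr => l _; rewrite mulrAC.
apply: form_sum => k _; apply: form_sum => l _.
exact/formZ/mono_form/ltnSE/ltn_ord.
Qed.

Lemma zfac_form c : is_form 1 (zfac c).
Proof.
exists ('X - c%:P); first by rewrite size_XsubC.
by move=> [z|] /=; rewrite ?hornerXsubC // coefB coefX coefC subr0.
Qed.

Lemma efac_form c : is_form 1 (efac c).
Proof.
exists (1 + c^* *: 'X).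
  rewrite (leq_trans (size_polyD _ _)) // geq_max size_poly1.
  by rewrite (leq_trans (size_scale_leq _ _)) ?size_polyX.
move=> [z|] /=; first by rewrite hornerD hornerC hornerZ hornerX mulrC.
by rewrite coefD coefC coefZ coefX add0r mulr1.
Qed.

Lemma form_prod_neq N (i : 'I_N.+1) (F : 'I_N.+1 -> P1 -> C) :
  (forall j, is_form 1 (F j)) -> is_form N (fun x => \prod_(j < N.+1 | j != i) F j x).
Proof.
move=> formF; have := form_prod (index_enum 'I_N.+1) (P := fun j => j != i) (fun j _ => formF j).
by rewrite count_neq_ord.
Qed.

Definition jnr_basis N (g : 'I_N.+1 -> C) (i : 'I_N.+1) (eta zeta : P1) : C :=
  \prod_(j < N.+1 | j != i) (zfac (g j) zeta * efac (g j) eta).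

Lemma jnr_basisE N (g : 'I_N.+1 -> C) i eta zeta : jnr_basis g i eta zeta =
  (\prod_(j < N.+1 | j != i) efac (g j) eta) * \prod_(j < N.+1 | j != i) zfac (g j) zeta.
Proof. by rewrite /jnr_basis big_split mulrC. Qed.

Lemma jnr_basis_form_r N (g : 'I_N.+1 -> C) i eta : is_form N (jnr_basis g i eta).
Proof.
apply: eq_form (formZ _ (form_prod_neq i (fun j => zfac_form (g j)))) => zeta.
by rewrite jnr_basisE.
Qed.

Lemma jnr_basis_form_l N (g : 'I_N.+1 -> C) i zeta : is_form N (jnr_basis g i ^~ zeta).
Proof.
apply: eq_form (formZ _ (form_prod_neq i (fun j => efac_form (g j)))) => eta.
by rewrite jnr_basisE mulrC.
Qed.

Lemma antipK : involutive antip.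
Proof.
move=> [z|] /=; last by rewrite eqxx.
have [->|nz_z] := eqVneq z 0; first by [].
rewrite /= oppr_eq0 invr_eq0 conjC_eq0 (negPf nz_z).
by rewrite rmorphN fmorphV /= conjCK invrN invrK opprK.
Qed.

Lemma zfac_eq0 c z : (zfac c (Some z) == 0) = (z == c).
Proof. exact: subr_eq0. Qed.

Lemma efac_antip_eq0 c d : (efac d (antip (Some c)) == 0) = (d == c).
Proof.
rewrite /=; have [->|nz_c] := eqVneq c 0; first by rewrite /= conjC_eq0.
have nz_cc : c^* != 0 by rewrite conjC_eq0.
rewrite /= mulNr subr_eq0 eq_sym mulrC -(inj_eq (mulIf nz_cc)) mulfVK // mul1r.
exact: (inj_eq (can_inj conjCK)).
Qed.

Definition antip_zcoef (x : P1) : C :=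
  match x with None => -1 | Some e => if e == 0 then 1 else - (e^*)^-1 end.
Definition antip_ecoef (x : P1) : C :=
  match x with None => 1 | Some z => if z == 0 then -1 else (z^*)^-1 end.

Lemma antip_zcoef_neq0 x : antip_zcoef x != 0.
Proof.
case: x => [e|] /=; last by rewrite oppr_eq0 oner_eq0.
by have [_|nz_e] := eqVneq e 0; rewrite ?oner_eq0 ?oppr_eq0 ?invr_eq0 ?conjC_eq0.
Qed.

Lemma antip_ecoef_neq0 x : antip_ecoef x != 0.
Proof.
case: x => [z|] /=; last by rewrite oner_eq0.
by have [_|nz_z] := eqVneq z 0; rewrite ?oppr_eq0 ?oner_eq0 ?invr_eq0 ?conjC_eq0.
Qed.

Lemma zfac_antip c x : zfac c (antip x) = antip_zcoef x * (efac c x)^*.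
Proof.
case: x => [e|] /=; last by rewrite sub0r conjCK mulN1r.
have [->|nz_e] := eqVneq e 0; first by rewrite /= mul0r addr0 rmorph1 mulr1.
have nz_ce : e^* != 0 by rewrite conjC_eq0.
by rewrite /= rmorphD rmorph1 rmorphM /= conjCK; field.
Qed.

Lemma efac_antip c x : efac c (antip x) = antip_ecoef x * (zfac c x)^*.
Proof.
case: x => [z|] /=; last by rewrite mul0r addr0 rmorph1 mulr1.
have [->|nz_z] := eqVneq z 0; first by rewrite /= sub0r rmorphN mulN1r opprK.
have nz_cz : z^* != 0 by rewrite conjC_eq0.
by rewrite /= rmorphB; field.
Qed.

Lemma jnr_basis_antip N (g : 'I_N.+1 -> C) i eta zeta :
  jnr_basis g i (antip zeta) (antip eta) =
  (antip_zcoef eta * antip_ecoef zeta) ^+ N * (jnr_basis g i eta zeta)^*.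
Proof.
rewrite /jnr_basis rmorph_prod -(prodr_const_neq i) -big_split /=.
by apply: eq_bigr => j _; rewrite zfac_antip efac_antip rmorphM mulrACA [X in _ * X]mulrC.
Qed.

Lemma jnr_basis_antidiag N (g : 'I_N.+1 -> C) i x :
  jnr_basis g i (antip x) x =
  antip_ecoef x ^+ N * \prod_(j < N.+1 | j != i) (zfac (g j) x * (zfac (g j) x)^*).
Proof.
rewrite /jnr_basis -(prodr_const_neq i) -big_split.
by apply: eq_bigr => j _; rewrite efac_antip mulrCA.
Qed.

Section GridExpansion.
Variables (N : nat) (a : 'M[C]_N.+1) (g : 'I_N.+1 -> C).
Hypothesis g_inj : injective g.
Hypothesis grid : admits_grid a g.

Local Notation delta i := (antip (Some (g i))).

Lemma jnr_basis_grid_r i l eta : l != i -> jnr_basis g i eta (Some (g l)) = 0.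
Proof. by move=> neq_li; rewrite /jnr_basis (bigD1 l) //= subrr !mul0r. Qed.

Lemma jnr_basis_grid_l i k zeta : k != i -> jnr_basis g i (delta k) zeta = 0.
Proof.
move=> neq_ki; rewrite /jnr_basis (bigD1 k) //=.
by rewrite (eqP (_ : efac (g k) (delta k) == 0)) ?efac_antip_eq0 ?mulr0 ?mul0r.
Qed.

Lemma jnr_basis_diag_neq0 i : jnr_basis g i (delta i) (Some (g i)) != 0.
Proof.
apply/prodf_neq0 => j neq_ji; rewrite mulf_neq0 // ?zfac_eq0 ?efac_antip_eq0 //.
  by rewrite (inj_eq g_inj) eq_sym.
by rewrite (inj_eq g_inj).
Qed.

Definition grid_coef i :=
  bieval a (delta i) (Some (g i)) / jnr_basis g i (delta i) (Some (g i)).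

Lemma bieval_expansion eta zeta :
  bieval a eta zeta = \sum_i grid_coef i * jnr_basis g i eta zeta.
Proof.
pose D eta zeta := bieval a eta zeta - \sum_i grid_coef i * jnr_basis g i eta zeta.
suff D0 : D eta zeta = 0 by apply/eqP; rewrite -subr_eq0 -/(D _ _) D0.
have formD_r eta' : is_form N (D eta').
  apply: formB; first exact: bieval_form_r.
  by apply: form_sum => i _; apply/formZ/jnr_basis_form_r.
have formD_l zeta' : is_form N (D ^~ zeta').
  apply: formB; first exact: bieval_form_l.
  by apply: form_sum => i _; apply/formZ/jnr_basis_form_l.
have delta_inj : injective (fun i => delta i).
  by move=> i j /(can_inj antipK)/Some_inj/g_inj.
have D_grid j : D ^~ (Some (g j)) =1 fun=> 0.
  apply: form_eq0_inj (formD_l _) delta_inj _ => k; rewrite /D.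
  have [->|neq_kj] := eqVneq k j.
    rewrite (bigD1 j) //= big1 ?addr0 => [|i neq_ij].
      by rewrite divfK ?jnr_basis_diag_neq0 // subrr.
    by rewrite jnr_basis_grid_r ?mulr0 // eq_sym.
  rewrite big1 ?(grid neq_kj) ?subrr // => i _.
  have [<-|neq_ji] := eqVneq j i; first by rewrite jnr_basis_grid_l ?mulr0.
  by rewrite jnr_basis_grid_r ?mulr0.
have Some_g_inj : injective (fun i => Some (g i)) by move=> i j /Some_inj/g_inj.
exact: form_eq0_inj (formD_r eta) Some_g_inj (fun j => D_grid j eta) zeta.
Qed.

End GridExpansion.

Section Reality.
Variables (N : nat) (a : 'M[C]_N.+1) (g : 'I_N.+1 -> C).
Hypothesis g_inj : injective g.
Hypothesis grid : admits_grid a g.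
Hypothesis a_real : real_curve a.

Local Notation mu := (grid_coef a g).

Lemma conj_expansion_eq0 eta zeta :
  bieval a eta zeta = 0 -> \sum_i (mu i)^* * jnr_basis g i eta zeta = 0.
Proof.
move=> /(proj1 (a_real (eta, zeta))); rewrite /zeroset /= (bieval_expansion g_inj grid).
have -> : \sum_i mu i * jnr_basis g i (antip zeta) (antip eta) =
    (antip_zcoef eta * antip_ecoef zeta) ^+ N * (\sum_i (mu i)^* * jnr_basis g i eta zeta)^*.
  rewrite rmorph_sum mulr_sumr; apply: eq_bigr => i _.
  by rewrite jnr_basis_antip rmorphM /= conjCK mulrCA.
move/eqP; rewrite mulf_eq0 expf_eq0 mulf_eq0.
by rewrite (negPf (antip_zcoef_neq0 _)) (negPf (antip_ecoef_neq0 _)) andbF conjC_eq0 => /eqP.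
Qed.

End Reality.

Section JNRPolynomials.
Variables (N : nat) (g : 'I_N.+1 -> C).
Hypothesis g_inj : injective g.

Definition zfac_poly i : {poly C} := \prod_(j < N.+1 | j != i) ('X - (g j)%:P).
Definition efac_poly i : {poly C} := \prod_(j < N.+1 | j != i) (1 + (g j)^* *: 'X).

Lemma horner_efac_poly i e :
  (efac_poly i).[e] = \prod_(j < N.+1 | j != i) efac (g j) (Some e).
Proof.
rewrite horner_prod; apply: eq_bigr => j _.
by rewrite hornerD hornerC hornerZ hornerX mulrC.
Qed.

Lemma jnr_basis_horner i e z :
  jnr_basis g i (Some e) (Some z) = (efac_poly i).[e] * (zfac_poly i).[z].
Proof.
rewrite jnr_basisE horner_efac_poly horner_prod; congr (_ * _).
by apply: eq_bigr => j _; rewrite hornerXsubC.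
Qed.

Lemma zfac_polyE i :
  zfac_poly i = \prod_(z <- [seq g j | j <- index_enum 'I_N.+1 & j != i]) ('X - z%:P).
Proof. by rewrite big_map big_filter. Qed.

Lemma size_zfac_poly i : size (zfac_poly i) = N.+1.
Proof. by rewrite zfac_polyE size_prod_XsubC size_map size_filter count_neq_ord. Qed.

Lemma coef_zfac_poly_top i : (zfac_poly i)`_N = 1.
Proof.
have /monicP := monic_prod_XsubC (index_enum 'I_N.+1) (fun j => j != i) g.
by rewrite lead_coefE size_zfac_poly.
Qed.

Lemma separable_zfac_poly i : separable_poly (zfac_poly i).
Proof.
by rewrite zfac_polyE separable_prod_XsubC map_inj_uniq // filter_uniq // index_enum_uniq.
Qed.

Lemma zfac_poly_grid_eq0 i k : ((zfac_poly i).[g k] == 0) = (k != i).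
Proof.
rewrite horner_prod prodf_seq_eq0; apply/hasP/idP => [[j _ /andP[neq_ji]]|neq_ki].
  by rewrite hornerXsubC subr_eq0 => /eqP/g_inj->.
by exists k; rewrite ?mem_index_enum // neq_ki hornerXsubC subrr eqxx.
Qed.

Lemma horner_lagrange (d : 'I_N.+1 -> C) k :
  (\sum_i d i *: zfac_poly i).[g k] = d k * (zfac_poly k).[g k].
Proof.
rewrite horner_sum (bigD1 k) //= big1 ?addr0 ?hornerZ // => i neq_ik.
rewrite hornerZ; suff /eqP-> : (zfac_poly i).[g k] == 0 by rewrite mulr0.
by rewrite zfac_poly_grid_eq0 eq_sym.
Qed.

Lemma size_lagrange (d : 'I_N.+1 -> C) : (size (\sum_i d i *: zfac_poly i)%R <= N.+1)%N.
Proof.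
apply: leq_trans (size_sum _ _ _) _; apply/bigmax_leqP => i _.
by rewrite (leq_trans (size_scale_leq _ _)) ?size_zfac_poly.
Qed.

Lemma efac_poly_neq0 i : efac_poly i != 0.
Proof.
apply/prodf_neq0 => j _; apply: contra_neq (@oner_neq0 C) => /(congr1 (coefp 0)).
by rewrite /= coefD coefC coefZ coefX mulr0 addr0 coef0.
Qed.

Lemma efac_poly_antip_eq0 i k e :
  antip (Some (g k)) = Some e -> ((efac_poly i).[e] == 0) = (k != i).
Proof.
move=> De; rewrite horner_efac_poly -De prodf_seq_eq0.
apply/hasP/idP => [[j _ /andP[neq_ji]]|neq_ki].
  by rewrite efac_antip_eq0 => /eqP/g_inj<-.
by exists k; rewrite ?mem_index_enum // neq_ki efac_antip_eq0 eqxx.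
Qed.

End JNRPolynomials.

Section RealCurveWithGrid.
Variables (N : nat) (a : 'M[C]_N.+1) (g : 'I_N.+1 -> C).
Hypothesis N_gt0 : (0 < N)%N.
Hypothesis g_inj : injective g.
Hypothesis grid : admits_grid a g.
Hypothesis a_real : real_curve a.
Hypothesis off_antidiag : forall x, zeroset a x -> ~ antidiag x.

Local Notation mu := (grid_coef a g).
Local Notation L := (zfac_poly g).
Local Notation E := (efac_poly g).

Lemma grid_coef_neq0 i : mu i != 0.
Proof.
rewrite mulf_neq0 ?invr_neq0 ?jnr_basis_diag_neq0 //.
by apply/eqP => p0; apply: (off_antidiag (x := (antip (Some (g i)), Some (g i)))).
Qed.

(* The affine part of the curve, as a polynomial in [zeta] over [C[eta]]. *)
Definition fibre_poly : {poly {poly C}} := \sum_i (mu i *: E i)%:P * (L i)^:P.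

Lemma fibre_polyE e :
  map_poly (horner_eval e) fibre_poly = \sum_i (mu i * (E i).[e]) *: L i.
Proof.
rewrite rmorph_sum; apply: eq_bigr => i _.
rewrite rmorphM /= map_polyC /= horner_evalE hornerZ -mul_polyC; congr (_ * _).
by rewrite -map_poly_comp map_poly_id // => x _ /=; rewrite horner_evalE hornerC.
Qed.

Lemma size_fibre_poly : (size fibre_poly <= N.+1)%N.
Proof.
apply: leq_trans (size_sum _ _ _) _; apply/bigmax_leqP => i _.
by rewrite mul_polyC (leq_trans (size_scale_leq _ _)) // size_map_polyC size_zfac_poly.
Qed.

Lemma fibre_poly_antip k e :
  antip (Some (g k)) = Some e ->
  map_poly (horner_eval e) fibre_poly = (mu k * (E k).[e]) *: L k.
Proof.
move=> De; rewrite fibre_polyE (bigD1 k) //= big1 ?addr0 // => i neq_ik.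
by rewrite (eqP (_ : (E i).[e] == 0)) ?mulr0 ?scale0r ?(efac_poly_antip_eq0 _ _ De) // eq_sym.
Qed.

Lemma exists_generic_fibre : exists e, [/\ forall i, (E i).[e] != 0,
  size (\sum_i (mu i * (E i).[e]) *: L i) = N.+1 &
  separable_poly (\sum_i (mu i * (E i).[e]) *: L i)].
Proof.
have [k nz_gk] : exists k, g k != 0.
  have [g0|] := eqVneq (g ord0) 0; last by exists ord0.
  by exists ord_max; rewrite -g0 (inj_eq g_inj) -val_eqE /= -lt0n.
pose e1 := - ((g k)^*)^-1.
have De1 : antip (Some (g k)) = Some e1 by rewrite /= (negPf nz_gk).
have nz_c1 : mu k * (E k).[e1] != 0.
  by rewrite mulf_neq0 ?grid_coef_neq0 ?(efac_poly_antip_eq0 _ _ De1) ?eqxx.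
have top1 : (fibre_poly`_N).[e1] = mu k * (E k).[e1].
  by rewrite -horner_evalE -coef_map (fibre_poly_antip De1) coefZ coef_zfac_poly_top mulr1.
have size_fibre : size fibre_poly = N.+1.
  apply/eqP; rewrite eqn_leq size_fibre_poly /=; apply: contraR nz_c1.
  by rewrite -ltnNge ltnS -top1 => /leq_sizeP/(_ N (leqnn N))->; rewrite horner0.
have lead_fibre : lead_coef fibre_poly = fibre_poly`_N by rewrite lead_coefE size_fibre.
have nz_E : \prod_i E i != 0 by apply/prodf_neq0 => i _; apply: efac_poly_neq0.
have [|||e [nz_Ee nz_lead sep_e]] := exists_separable_fibre (P := fibre_poly) (e1 := e1) nz_E.
- by rewrite size_fibre ltnS.
- by rewrite lead_fibre top1.
- by rewrite (fibre_poly_antip De1) (eqp_separable (eqp_scale _ nz_c1)) separable_zfac_poly.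
exists e; rewrite -fibre_polyE; split => //.
  by move=> i; apply: contraNneq nz_Ee; rewrite (bigD1 i) //= hornerM => ->; rewrite mul0r.
by rewrite size_map_poly_id0 ?horner_evalE.
Qed.

Lemma conj_grid_coef : exists c, forall i, (mu i)^* = c * mu i.
Proof.
have [e [nz_E size_A sep_A]] := exists_generic_fibre.
pose B := \sum_i ((mu i)^* * (E i).[e]) *: L i.
have [|z|c DB] := separable_roots_scale (q := B) sep_A.
- by rewrite size_A size_lagrange.
- move=> /eqP A0; apply/eqP.
  have p0 : bieval a (Some e) (Some z) = 0.
    rewrite (bieval_expansion g_inj grid) -[RHS]A0 horner_sum; apply: eq_bigr => i _.
    by rewrite jnr_basis_horner hornerZ mulrA.
  apply: etrans (conj_expansion_eq0 g_inj grid a_real p0); rewrite horner_sum.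
  by apply: eq_bigr => i _; rewrite jnr_basis_horner hornerZ mulrA.
exists c => i; have := congr1 (horner^~ (g i)) DB.
have nz_L : (L i).[g i] != 0 by rewrite zfac_poly_grid_eq0 ?eqxx.
by rewrite hornerZ !(horner_lagrange g_inj) !mulrA => /(mulIf nz_L)/(mulIf (nz_E i)).
Qed.

Definition grid_ratio i := mu i / mu ord0.

Lemma grid_ratio0 : grid_ratio ord0 = 1.
Proof. by rewrite /grid_ratio divff ?grid_coef_neq0. Qed.

Lemma grid_ratio_real i : grid_ratio i \is Num.real.
Proof.
have [c conj_mu] := conj_grid_coef.
have nz_c : c != 0.
  by apply: contraNneq (grid_coef_neq0 ord0) => c0; rewrite -conjC_eq0 conj_mu c0 mul0r.
apply/CrealP; rewrite /grid_ratio fmorph_div /= !conj_mu.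
by rewrite -mulf_div divff ?mul1r.
Qed.

Definition antidiag_eval z := \sum_i grid_ratio i *
  \prod_(j < N.+1 | j != i) (zfac (g j) (Some z) * (zfac (g j) (Some z))^*).

Lemma antidiag_eval_neq0 z : antidiag_eval z != 0.
Proof.
have : bieval a (antip (Some z)) (Some z) != 0.
  by apply/eqP => p0; apply: (off_antidiag (x := (antip (Some z), Some z))).
apply: contra => /eqP W0; rewrite (bieval_expansion g_inj grid).
suff -> : \sum_i mu i * jnr_basis g i (antip (Some z)) (Some z) =
          antip_ecoef (Some z) ^+ N * mu ord0 * antidiag_eval z by rewrite W0 mulr0.
rewrite /antidiag_eval !mulr_sumr; apply: eq_bigr => i _.
have := grid_coef_neq0 ord0; rewrite jnr_basis_antidiag /grid_ratio => nz_mu0.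
by field; exact: nz_mu0.
Qed.

Lemma antidiag_eval_grid l : antidiag_eval (g l) = grid_ratio l *
  \prod_(j < N.+1 | j != l) (zfac (g j) (Some (g l)) * (zfac (g j) (Some (g l)))^*).
Proof.
rewrite /antidiag_eval (bigD1 l) //= [X in _ + X]big1 ?addr0 // => i neq_il.
by rewrite (bigD1 l) 1?eq_sym //= subrr mul0r !mul0r mulr0.
Qed.

Lemma grid_ratio_gt0 i : 0 < grid_ratio i.
Proof.
have pos_grid l : 0 < \prod_(j < N.+1 | j != l)
    (zfac (g j) (Some (g l)) * (zfac (g j) (Some (g l)))^*).
  by apply: prodr_gt0 => j neq_jl; rewrite mul_conjC_gt0 zfac_eq0 (inj_eq g_inj) eq_sym.
rewrite real_ltNge ?grid_ratio_real //; apply/negP => ratio_le0.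
pose b := g i - g ord0.
pose line j : {poly C} := (g ord0 - g j)%:P + b *: 'X.
pose G := \sum_l grid_ratio l *:
  \prod_(j < N.+1 | j != l) (line j * map_poly Num.conj (line j)).
have GE (t : Rdefinitions.R) : G.[t%:C%C] = antidiag_eval (g ord0 + t%:C%C * b).
  rewrite /G horner_sum; apply: eq_bigr => l _; rewrite hornerZ horner_prod; congr (_ * _).
  have conj_t : (t%:C%C)^* = t%:C%C := conjc_real t.
  apply: eq_bigr => j _; rewrite hornerM -[in X in _ * X]conj_t horner_map /=.
  by rewrite !hornerE /= addrAC [b * _]mulrC.
have G_real : map_poly Num.conj G = G.
  rewrite rmorph_sum; apply: eq_bigr => l _.
  rewrite /= map_polyZ rmorph_prod /= (CrealP (grid_ratio_real l)); congr (_ *: _).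
  by apply: eq_bigr => j _; rewrite rmorphM /= map_poly_conjK mulrC.
have [|t _] := real_poly_ivt G_real.
  rewrite -[0]/(0%:C%C) -[1]/(1%:C%C) !GE mul0r addr0 mul1r /b addrC subrK.
  rewrite !antidiag_eval_grid grid_ratio0 mul1r.
  by rewrite (pmulr_rle0 _ (pos_grid _)) (pmulr_lle0 _ (pos_grid _)).
by rewrite /root GE (negPf (antidiag_eval_neq0 _)).
Qed.

End RealCurveWithGrid.

Unset Implicit Arguments.
Theorem mainTheorem3 (N : nat) (a : 'M[C]_(N.+1, N.+1)) (g : 'I_N.+1 -> C) :
  (1 <= N)%N ->
  a != 0 ->
  real_curve a ->
  (forall x, zeroset a x -> ~ antidiag x) ->
  injective g ->
  admits_grid a g ->
  exists lam : 'I_N.+1 -> Rdefinitions.R,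
    (forall i, 0 < lam i) /\
    (forall x : P1 * P1, zeroset a x <-> jnr_eval g lam x = 0).
Proof.
move=> N_gt0 _ a_real off_antidiag g_inj grid.
have ratio_gt0 := grid_ratio_gt0 N_gt0 g_inj grid a_real off_antidiag.
have nz_mu0 := grid_coef_neq0 g_inj off_antidiag ord0.
pose ratio i := complex.Re (grid_ratio a g i).
have ratioE i : (ratio i)%:C%C = grid_ratio a g i by rewrite RRe_real ?gtr0_real.
have Re_ratio_gt0 i : 0 < ratio i by rewrite -ltcR ratioE.
exists (fun i => Num.sqrt (ratio i)); split => [i|x]; first by rewrite sqrtr_gt0.
have pE : bieval a x.1 x.2 = grid_coef a g ord0 * jnr_eval g (fun i => Num.sqrt (ratio i)) x.
  rewrite (bieval_expansion g_inj grid) /jnr_eval mulr_sumr; apply: eq_bigr => i _.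
  by rewrite sqr_sqrtr ?ltW // ratioE /grid_ratio mulrA mulrCA divff ?mulr1.
rewrite /zeroset pE; split => [/eqP|->]; last by rewrite mulr0.
by rewrite mulf_eq0 (negPf nz_mu0) => /eqP.
Qed.
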